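(* Let $n\geq1$ and $\Delta:=\rho_n^{n+1}\in M_n$. Then: (1) $\rho_1(\rho_n\rho_1)^{n-1}=\rho_n^{\,n}$, and hence $\Delta=(\rho_1\rho_n)^n=(\rho_n\rho_1)^n$. (2) For $1\leq i\leq n$, setting $a_i:=\rho_n^{\,i}(\rho_1\rho_n)^{n-i}$, one has $\rho_ia_i=a_i\rho_i=\Delta$; in particular each generator $\rho_i$ is both a left- and a right-divisor of $\Delta$, and $\Delta$ is central in $M_n$. (3) For all $a,b\in M_n$, if $ab=\Delta$ then $ba=\Delta$.
   Context: $M_n$ denotes the monoid with generators $\rho_1,\dots,\rho_n$ and relations $\rho_1\rho_n\rho_i=\rho_{i+1}\rho_n$ for $1\leq i\leq n-1$. *)

From mathcomp Require Import all_boot.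
From Stdlib Require Import Relations.
Set Implicit Arguments. Unset Strict Implicit. Unset Printing Implicit Defensive.

(* The monoid M_n = < rho_1..rho_n | rho_1 rho_n rho_i = rho_{i+1} rho_n, 1<=i<=n-1 >.
   Elements are represented by words: a word is a [seq nat], the letter [k]
   standing for the generator rho_k (1 <= k <= n). The empty word is 1,
   concatenation is the product. *)

Definition valid_word (n : nat) (w : seq nat) : bool :=
  all (fun k => (0 < k) && (k <= n)) w.

Inductive Mstep (n : nat) : seq nat -> seq nat -> Prop :=
| Mstep_rel (u v : seq nat) (i : nat) :
    1 <= i -> i <= n - 1 ->
    Mstep n (u ++ [:: 1; n; i] ++ v) (u ++ [:: i.+1; n] ++ v).

Definition Meq (n : nat) : seq nat -> seq nat -> Prop :=
  clos_refl_sym_trans (seq nat) (Mstep n).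

Definition wpow (w : seq nat) (k : nat) : seq nat := flatten (nseq k w).

(* Everything rests on the shifting identity
       (rho_1 rho_n)^m rho_i rho_n^c = rho_(i+m) rho_n^(c+m)      (i + m <= n),
   obtained by applying the defining relation m times; parts (1) and (2) are
   direct instances of it, and centrality follows from (2) letter by letter.
   Part (3) additionally needs LEFT CANCELLATIVITY of M_n.  We prove it by the
   classical "complement" argument: for letters x <> y, an equation x u = y v
   forces u = (x\y) r and v = (y\x) r, where x\y = rho_n^x rho_(y-x) if x < y
   and rho_n^y otherwise.  This is shown by induction on a weight preserved by
   the relations, composing the description along a chain of elementary
   steps; the composition step is a "diamond" lemma with three cases according
   to the relative order of the three head letters.  With cancellation, (3)
   follows by moving the letters of a to the right end one at a time. *)
From mathcomp Require Import all_boot.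
From Stdlib Require Import Relations.
From mathcomp Require Import zify.
Set Implicit Arguments. Unset Strict Implicit.

Section Monoid.
Variable n : nat.

Lemma Meq_refl a : Meq n a a. Proof. exact: rst_refl. Qed.
Lemma Meq_sym a b : Meq n a b -> Meq n b a. Proof. exact: rst_sym. Qed.
Lemma Meq_trans a b c : Meq n a b -> Meq n b c -> Meq n a c.
Proof. exact: rst_trans. Qed.

Lemma Mstep_ctx c d a b : Mstep n a b -> Mstep n (c ++ a ++ d) (c ++ b ++ d).
Proof.
case=> u v i h1 h2; have := Mstep_rel (c ++ u) (v ++ d) h1 h2.
by rewrite -!catA.
Qed.

Lemma Meq_ctx c d a b : Meq n a b -> Meq n (c ++ a ++ d) (c ++ b ++ d).
Proof.
elim=> [x y H|x|x y _|x y z _ IH1 _ IH2].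
- exact/rst_step/Mstep_ctx.
- exact: Meq_refl.
- exact: Meq_sym.
- exact: Meq_trans IH2.
Qed.

Lemma Meq_catl c a b : Meq n a b -> Meq n (c ++ a) (c ++ b).
Proof. by move/(Meq_ctx c [::]); rewrite !cats0. Qed.

Lemma Meq_cons k a b : Meq n a b -> Meq n (k :: a) (k :: b).
Proof. exact: (Meq_catl [:: k]). Qed.

Lemma Meq_catr d a b : Meq n a b -> Meq n (a ++ d) (b ++ d).
Proof. exact: (Meq_ctx [::] d). Qed.

Lemma wpowD (w : seq nat) a b : wpow w (a + b) = wpow w a ++ wpow w b.
Proof. by rewrite /wpow nseqD flatten_cat. Qed.

Lemma wpowSr (w : seq nat) m : wpow w m.+1 = wpow w m ++ w.
Proof. by rewrite -addn1 wpowD /wpow /= cats0. Qed.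

Lemma wpow_swap a b m : a :: wpow [:: b; a] m = wpow [:: a; b] m ++ [:: a].
Proof.
elim: m => [//|m IH].
by rewrite /wpow /= -/(wpow [:: b; a] m) -/(wpow [:: a; b] m) -IH.
Qed.

Lemma nseq_split a b : a <= b -> nseq b n = nseq a n ++ nseq (b - a) n.
Proof. by move=> hab; rewrite -nseqD subnKC. Qed.

Lemma shift_letter m i c q : 1 <= i -> i + m <= n ->
  Meq n (wpow [:: 1; n] m ++ i :: nseq c n ++ q) ((i + m) :: nseq (c + m) n ++ q).
Proof.
elim: m => [|m IH] hi him; first by rewrite !addn0; exact: Meq_refl.
rewrite -[wpow _ m.+1]/([:: 1; n] ++ wpow [:: 1; n] m) -catA.
apply: Meq_trans (Meq_catl [:: 1; n] (IH hi ltac:(lia))) _.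
apply: rst_step; rewrite !addnS.
by apply: (Mstep_rel [::] (nseq (c + m) n ++ q)); lia.
Qed.

Lemma exchange_block j k q : 1 <= j -> 1 <= k -> j + k <= n ->
  Meq n (j :: nseq j n ++ k :: q) ((j + k) :: nseq j n ++ q).
Proof.
case: j => [//|j] _ hk hjk.
have E1 := @shift_letter j 1 1 (k :: q) (leqnn 1) ltac:(lia).
have E2 := @shift_letter j.+1 k 0 q hk ltac:(lia).
rewrite add1n in E1; rewrite wpowSr -catA add0n addnC in E2.
exact: Meq_trans (Meq_sym E1) E2.
Qed.

(* A weight preserved by the relations (letter k weighs k, and 0 weighs 1);
   it is the induction measure for left cancellation. *)
Definition weight (w : seq nat) : nat := sumn (map (maxn^~ 1) w).

Lemma weight_cat a b : weight (a ++ b) = weight a + weight b.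
Proof. by rewrite /weight map_cat sumn_cat. Qed.

Lemma weight_cons k w : weight (k :: w) = maxn k 1 + weight w.
Proof. by []. Qed.

Lemma Meq_weight a b : Meq n a b -> weight a = weight b.
Proof.
elim=> [x y []|x|x y _ ->|x y z _ -> _ ->] // u v i h1 h2.
rewrite !weight_cat /weight /= (maxn_idPl h1) (maxn_idPl (leqW h1)); lia.
Qed.

(* The right complement x\y: the word with x (x\y) = y (y\x) (see exchange_block). *)
Definition compl (x y : nat) : seq nat :=
  nseq (minn x y) n ++ (if x < y then [:: y - x] else [::]).

Lemma compl_lt x y : x < y -> compl x y = nseq x n ++ [:: y - x].
Proof. by move=> h; rewrite /compl (minn_idPl (ltnW h)) h. Qed.

Lemma compl_gt x y : y < x -> compl x y = nseq y n.
Proof. by move=> h; rewrite /compl (minn_idPr (ltnW h)) ltnNge (ltnW h) cats0. Qed.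

(* heads_split x u y v: what an equation x u = y v says about u and v. *)
Definition heads_split (x : nat) (u : seq nat) (y : nat) (v : seq nat) : Prop :=
  (x = y -> Meq n u v) /\
  (x <> y -> [/\ 0 < x <= n, 0 < y <= n &
      exists r, Meq n u (compl x y ++ r) /\ Meq n v (compl y x ++ r)]).

Lemma heads_split_sym x u y v : heads_split x u y v -> heads_split y v x u.
Proof.
case=> Heq Hne; split=> [/esym/Heq/Meq_sym //|/nesym/Hne [hx hy [r [Hu Hv]]]].
by split=> //; exists r.
Qed.

Lemma Mstep_heads_split a b : Mstep n a b ->
  forall x u y v, a = x :: u -> b = y :: v -> heads_split x u y v.
Proof.
case=> [[|k w] v0 i h1 h2] x u y v /= [<- <-] [<- <-]; last first.
  by split=> // _; apply: rst_step; exact: Mstep_rel.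
split=> [|_]; first lia.
have hl : 1 < i.+1 by lia.
split; [lia|lia|exists v0].
by rewrite (compl_lt hl) (compl_gt hl) subn1; split; exact: Meq_refl.
Qed.

Section Composition.
Variable W : nat.
Hypothesis cancel_IH : forall x u y v,
  weight (x :: u) <= W -> Meq n (x :: u) (y :: v) -> heads_split x u y v.

Lemma cancel_prefix c p q :
  weight (c ++ p) <= W -> Meq n (c ++ p) (c ++ q) -> Meq n p q.
Proof.
elim: c => [//|a c IHc] hw H; apply: IHc.
  by move: hw; rewrite /= weight_cons; lia.
by case: (cancel_IH hw H) => + _; apply.
Qed.

(* The diamond: if y\x p = y\z q, then x\y p and z\y q have a common form.
   The three cases below follow the position of y relative to x < z. *)
Definition diamond (x y z : nat) (p q : seq nat) : Prop :=
  exists r, Meq n (compl x y ++ p) (compl x z ++ r) /\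
            Meq n (compl z y ++ q) (compl z x ++ r).

Lemma diamond_low x y z p q : y < x -> x < z -> z <= n ->
  weight (compl y x ++ p) <= W -> Meq n (compl y x ++ p) (compl y z ++ q) ->
  diamond x y z p q.
Proof.
move=> hyx hxz hz; have hyz := ltn_trans hyx hxz.
rewrite /diamond (compl_lt hyx) (compl_lt hyz) (compl_gt hyx) (compl_gt hyz).
rewrite (compl_lt hxz) (compl_gt hxz) (nseq_split (ltnW hyx)) -!catA => hw H.
have hw' : weight ((x - y) :: p) <= W.
  by move: hw; rewrite weight_cat !weight_cons; lia.
have [_ /(_ ltac:(lia)) [_ _ [r]]] := cancel_IH hw' (cancel_prefix hw H).
have l : x - y < z - y by lia.
rewrite (compl_lt l) (compl_gt l) (_ : z - y - (x - y) = z - x); last lia.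
by move=> [Hp Hq]; exists r; rewrite -!catA; split; apply: Meq_catl; rewrite ?catA.
Qed.

Lemma diamond_mid x y z p q : 0 < x -> x < y -> y < z -> z <= n ->
  weight (compl y x ++ p) <= W -> Meq n (compl y x ++ p) (compl y z ++ q) ->
  diamond x y z p q.
Proof.
move=> hx hxy hyz hz; have hxz := ltn_trans hxy hyz.
rewrite /diamond (compl_gt hxy) (compl_lt hyz) (compl_lt hxy) (compl_gt hyz).
rewrite (compl_lt hxz) (compl_gt hxz) (nseq_split (ltnW hxy)) -!catA => hw H.
exists (nseq (y - x) n ++ q); split; last exact: Meq_refl.
rewrite -catA; apply/Meq_catl/(Meq_trans (Meq_cons _ (cancel_prefix hw H))).
rewrite (_ : z - x = (y - x) + (z - y)); last lia.
by apply: exchange_block; lia.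
Qed.

Lemma diamond_high x y z p q : 0 < x -> x < z -> z < y -> y <= n ->
  weight (compl y x ++ p) <= W -> Meq n (compl y x ++ p) (compl y z ++ q) ->
  diamond x y z p q.
Proof.
move=> hx hxz hzy hy; have hxy := ltn_trans hxz hzy.
rewrite /diamond (compl_gt hxy) (compl_gt hzy) (compl_lt hxy) (compl_lt hzy).
rewrite (compl_lt hxz) (compl_gt hxz) (nseq_split (ltnW hxz)) -!catA => hw H.
exists (nseq (z - x) n ++ (y - z) :: q); split; last exact: Meq_refl.
rewrite -catA; apply/Meq_catl/(Meq_trans (Meq_cons _ (cancel_prefix hw H)))/Meq_sym.
rewrite (_ : y - x = (z - x) + (y - z)); last lia.
by apply: exchange_block; lia.
Qed.

Lemma diamond_lt x y z p q : y <> x -> y <> z -> x < z ->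
  0 < x -> 0 < y <= n -> z <= n ->
  weight (compl y x ++ p) <= W -> Meq n (compl y x ++ p) (compl y z ++ q) ->
  diamond x y z p q.
Proof.
move=> nyx nyz hxz hx /andP [hy0 hy] hz.
have [hyx|hxy] := ltnP y x; first exact: diamond_low.
have [hyz|hzy] := ltnP y z; first by apply: diamond_mid; lia.
by apply: diamond_high; lia.
Qed.

Lemma diamond_ne x y z p q : y <> x -> y <> z -> x <> z ->
  0 < x <= n -> 0 < y <= n -> 0 < z <= n ->
  weight (compl y x ++ p) <= W -> Meq n (compl y x ++ p) (compl y z ++ q) ->
  diamond x y z p q.
Proof.
move=> nyx nyz nxz /andP [hx0 hx] hy /andP [hz0 hz] hw H.
have [hxz|hzx] := ltnP x z; first exact: diamond_lt.
have hw' : weight (compl y z ++ q) <= W by rewrite -(Meq_weight H).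
have [|r [Hq Hp]] := diamond_lt nyz nyx _ hz0 hy hx hw' (Meq_sym H); first lia.
by exists r.
Qed.

Lemma heads_split_trans x u y v z s : weight v <= W ->
  heads_split x u y v -> heads_split y v z s -> heads_split x u z s.
Proof.
move=> hw [A1 A2] [B1 B2].
have [exy|/eqP nxy] := eqVneq x y.
  subst y; have Huv := A1 erefl.
  split=> [/B1/(Meq_trans Huv) //|/B2 [h1 h2 [r [r1 r2]]]].
  by split=> //; exists r; split=> //; exact: Meq_trans Huv r1.
have [eyz|/eqP nyz] := eqVneq y z.
  subst z; have Hvs := B1 erefl; split=> [/nxy //|/A2 [h1 h2 [r [r1 r2]]]].
  by split=> //; exists r; split=> //; exact: Meq_trans (Meq_sym Hvs) r2.
have [hx hy [p [Hu Hv]]] := A2 nxy.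
have [_ hz [q [Hv' Hs]]] := B2 nyz.
have Hpq := Meq_trans (Meq_sym Hv) Hv'.
have hwp : weight (compl y x ++ p) <= W by rewrite -(Meq_weight Hv).
have [exz|/eqP nxz] := eqVneq x z.
  subst z; split=> [_|//]; apply: Meq_trans Hu (Meq_trans _ (Meq_sym Hs)).
  exact/Meq_catl/(cancel_prefix hwp).
split=> [/nxz //|_]; split=> //.
have [r [Hr1 Hr2]] := diamond_ne (nesym nxy) nyz nxz hx hy hz hwp Hpq.
by exists r; split; [exact: Meq_trans Hu Hr1 | exact: Meq_trans Hs Hr2].
Qed.

Lemma heads_split_chain a b : Meq n a b ->
  forall x u y v, a = x :: u -> b = y :: v -> weight (x :: u) <= W.+1 ->
  heads_split x u y v.
Proof.
elim=> [{}a {}b Hs|{}a|{}a {}b Hab IH|{}a {}b c Hab IH1 _ IH2] x u y v ea eb hw.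
- exact: (Mstep_heads_split Hs ea eb).
- by subst; case: eb => -> ->; split=> // _; exact: Meq_refl.
- by apply/heads_split_sym/(IH _ _ _ _ eb ea); rewrite -eb (Meq_weight Hab) ea.
- have hwb : weight b = weight (x :: u) by rewrite -(Meq_weight Hab) ea.
  case eb' : b hwb => [|y' v'] hwb.
    by move: hwb; rewrite weight_cons /weight /=; lia.
  apply: (heads_split_trans _ (IH1 _ _ _ _ ea eb' hw)).
    by move: hwb hw; rewrite weight_cons; lia.
  by apply: (IH2 _ _ _ _ eb' eb); rewrite hwb.
Qed.

End Composition.

Lemma heads_split_Meq W x u y v : weight (x :: u) <= W ->
  Meq n (x :: u) (y :: v) -> heads_split x u y v.
Proof.
elim: W x u y v => [|W IHW] x u y v; first by rewrite weight_cons; lia.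
by move=> hw H; exact: (heads_split_chain IHW H erefl erefl hw).
Qed.

Lemma cancel_letter x u v : Meq n (x :: u) (x :: v) -> Meq n u v.
Proof. by case/(heads_split_Meq (leqnn _)) => + _; apply. Qed.

Hypothesis hn : 1 <= n.

Let Delta := nseq n.+1 n.

Lemma rho1_rhon1_pow : Meq n ([:: 1] ++ wpow [:: n; 1] n.-1) (nseq n n).
Proof.
have := @shift_letter n.-1 1 0 [::] (leqnn 1) ltac:(lia).
have -> : nseq n n = n :: nseq n.-1 n by rewrite -{1}(prednK hn).
by rewrite /= wpow_swap add1n add0n prednK // !cats0.
Qed.

Lemma Delta_rho1n : Meq n Delta (wpow [:: 1; n] n).
Proof.
have := @shift_letter n.-1 1 1 [::] (leqnn 1) ltac:(lia).
rewrite add1n prednK // !cats0 -[1 :: nseq 1 n]/[:: 1; n] -wpowSr prednK //.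
exact: Meq_sym.
Qed.

Lemma Delta_rhon1 : Meq n Delta (wpow [:: n; 1] n).
Proof.
have -> : wpow [:: n; 1] n = n :: ([:: 1] ++ wpow [:: n; 1] n.-1).
  by rewrite -[X in wpow _ X](prednK hn).
exact/Meq_cons/Meq_sym/rho1_rhon1_pow.
Qed.

Definition cofactor (i : nat) : seq nat := nseq i n ++ wpow [:: 1; n] (n - i).

Lemma cofactor_left i : 1 <= i <= n -> Meq n (i :: cofactor i) Delta.
Proof.
case/andP=> h1 h2.
have := @shift_letter i.-1 1 1 (wpow [:: 1; n] (n - i)) (leqnn 1) ltac:(lia).
rewrite add1n prednK // -[1 :: _ ++ _]/([:: 1; n] ++ _) catA -wpowSr -wpowD.
rewrite prednK // subnKC // => /Meq_sym/Meq_trans; apply.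
exact: Meq_sym Delta_rho1n.
Qed.

Lemma cofactor_right i : 1 <= i <= n -> Meq n (cofactor i ++ [:: i]) Delta.
Proof.
case/andP=> h1 h2.
have := @shift_letter (n - i) i 0 [::] h1 ltac:(lia).
rewrite add0n subnKC // /cofactor -catA /Delta (nseq_split (leqW h2)) subSn //.
by move/(Meq_catl (nseq i n)); rewrite !cats0 => H; exact: H.
Qed.

Lemma Delta_central w : valid_word n w -> Meq n (Delta ++ w) (w ++ Delta).
Proof.
elim: w => [_|k w IH /andP [hk /IH Hw]]; first by rewrite cats0; exact: Meq_refl.
rewrite -cat1s catA.
apply: Meq_trans (Meq_catr _ (Meq_catr _ (Meq_sym (cofactor_left hk)))) _.
apply: Meq_cons.
exact: Meq_trans (Meq_catr _ (cofactor_right hk)) Hw.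
Qed.

(* Part (3): ab = Delta implies ba = Delta, moving the letters of a one by one. *)
Lemma Delta_rotate a b : valid_word n a ->
  Meq n (a ++ b) Delta -> Meq n (b ++ a) Delta.
Proof.
elim: a b => [|x a IH] b; first by rewrite cats0.
case/andP=> hx ha H.
have Hc : Meq n (a ++ b) (cofactor x).
  by apply: (@cancel_letter x); exact: Meq_trans H (Meq_sym (cofactor_left hx)).
rewrite -cat1s catA; apply: (IH _ ha).
by rewrite catA; exact: Meq_trans (Meq_catr _ Hc) (cofactor_right hx).
Qed.

End Monoid.

Theorem proposition4p14 (n : nat) (hn : 1 <= n) :
  let Delta := nseq n.+1 n in
  [/\ Meq n ([:: 1] ++ wpow [:: n; 1] n.-1) (nseq n n),
      Meq n Delta (wpow [:: 1; n] n) /\ Meq n Delta (wpow [:: n; 1] n),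
      (forall i, 1 <= i -> i <= n ->
         let a := nseq i n ++ wpow [:: 1; n] (n - i) in
         Meq n ([:: i] ++ a) Delta /\ Meq n (a ++ [:: i]) Delta),
      (forall w, valid_word n w -> Meq n (Delta ++ w) (w ++ Delta)) &
      (forall a b, valid_word n a -> valid_word n b ->
         Meq n (a ++ b) Delta -> Meq n (b ++ a) Delta)].
Proof.
rewrite /=; split.
- exact: rho1_rhon1_pow.
- exact: conj (Delta_rho1n hn) (Delta_rhon1 hn).
- move=> i h1 h2 /=; have hi : 1 <= i <= n by rewrite h1.
  exact (conj (cofactor_left hn hi) (cofactor_right hn hi)).
- exact (Delta_central hn).
- by move=> a b ha _; exact (Delta_rotate hn ha).
Qed.
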